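(* Let $A$ with projections $\pi_B:A\to B$, $\pi_C:A\to C$ be a pullback in $\mathbf{Sets}$ of $f_1:B\to D$ and $g_1:C\to D$, where $g_1$ is injective. Then $\mathcal{PP}_b(A)$ with $\mathcal{PP}_b(\pi_B),\mathcal{PP}_b(\pi_C)$ is a pullback of $\mathcal{PP}_b(f_1)$ and $\mathcal{PP}_b(g_1)$ in $\mathbf{Sets}$.
   Context: For a set $M$ whose elements are treated as atoms (urelements, distinct from every set built below), let $T_1=\mathcal{P}(M)$, $T_{n+1}=T_n\cup\mathcal{P}(T_n)$, and $\mathcal{PP}_b(M)=\bigcup_{n\ge 1}T_n$. For $f:M\to N$, $\mathcal{PP}_b(f)$ is defined recursively on $X\in\mathcal{PP}_b(M)$ by $\mathcal{PP}_b(f)(X)=\{f(x)\mid x\in X\cap M\}\cup\{\mathcal{PP}_b(f)(x)\mid x\in X\setminus M\}$; this makes $\mathcal{PP}_b$ a functor $\mathbf{Sets}\to\mathbf{Sets}$. *)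

From Stdlib Require Import ClassicalEpsilon.

Definition is_pullback {A B C D : Type}
  (pB : A -> B) (pC : A -> C) (f : B -> D) (g : C -> D) : Prop :=
  (forall a, f (pB a) = g (pC a)) /\
  (forall (X : Type) (h : X -> B) (k : X -> C),
     (forall x, f (h x) = g (k x)) ->
     exists u : X -> A,
       (forall x, pB (u x) = h x) /\ (forall x, pC (u x) = k x) /\
       (forall u' : X -> A,
          (forall x, pB (u' x) = h x) -> (forall x, pC (u' x) = k x) ->
          forall x, u' x = u x)).

(* Codes for the levels T_{n+1} of PP_b(M).                             *)
(* Lvl M 0 codes T_1 = P(M): a subset of M.                             *)
(* Lvl M (S k) codes T_{k+2} = T_{k+1} u P(T_{k+1}) = P(M) u P(T_{k+1}):*)
(*   inl P  : the subset P of M (atoms),                                *)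
(*   inr X  : the set { [[u]] | X u } of elements of T_{k+1}.           *)
Fixpoint Lvl (M : Type) (n : nat) : Type :=
  match n with
  | O => M -> Prop
  | S k => ((M -> Prop) + (Lvl M k -> Prop))%type
  end.

(* Equality of the denoted sets (atoms are distinct from all sets;      *)
(* the only set that is both a set of atoms and a set of sets is the    *)
(* empty set).                                                          *)
Definition eq_atoms (M : Type) (P : M -> Prop) (m : nat) : Lvl M m -> Prop :=
  match m return Lvl M m -> Prop with
  | O => fun P' => forall a, P a <-> P' a
  | S _ => fun y => match y with
                    | inl P' => forall a, P a <-> P' a
                    | inr Y => (forall a, ~ P a) /\ (forall v, ~ Y v)
                    end
  end.

Fixpoint eqc (M : Type) (n : nat) : Lvl M n -> forall m, Lvl M m -> Prop :=
  match n return Lvl M n -> forall m, Lvl M m -> Prop with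
  | O => fun P => eq_atoms M P
  | S k => fun x =>
      match x with
      | inl P => eq_atoms M P
      | inr X => fun m =>
          match m return Lvl M m -> Prop with
          | O => fun P' => (forall u, ~ X u) /\ (forall a, ~ P' a)
          | S m' => fun y =>
              match y with
              | inl P' => (forall u, ~ X u) /\ (forall a, ~ P' a)
              | inr Y =>
                  (forall u, X u -> exists v, Y v /\ eqc M k u m' v) /\
                  (forall v, Y v -> exists u, X u /\ eqc M k u m' v)
              end
          end
      end
  end.

(* Action of PP_b(f) on codes:                                          *)
(* PP_b(f)(X) = {f x | x in X n M} u {PP_b(f) x | x in X \ M}.          *)
Fixpoint lmap (M N : Type) (f : M -> N) (n : nat) : Lvl M n -> Lvl N n :=
  match n return Lvl M n -> Lvl N n with
  | O => fun P => fun b => exists a, P a /\ f a = b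
  | S k => fun x =>
      match x with
      | inl P => inl (fun b => exists a, P a /\ f a = b)
      | inr X => inr (fun v => exists u, X u /\ v = lmap M N f k u)
      end
  end.

Definition Code (M : Type) : Type := {n : nat & Lvl M n}.

Definition ceq {M : Type} (x y : Code M) : Prop :=
  eqc M (projT1 x) (projT2 x) (projT1 y) (projT2 y).

Definition cmap {M N : Type} (f : M -> N) (x : Code M) : Code N :=
  existT _ (projT1 x) (lmap M N f (projT1 x) (projT2 x)).

(* PP_b(M): codes up to equality of the denoted sets, i.e. the set of   *)
(* equivalence classes of codes (a genuine type with Leibniz equality). *)
Definition PPb (M : Type) : Type := {K : Code M -> Prop | exists x, K = ceq x}.

Definition cls {M : Type} (x : Code M) : PPb M :=
  exist _ (ceq x) (ex_intro _ x eq_refl).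

Definition rep {M : Type} (K : PPb M) : Code M :=
  proj1_sig (constructive_indefinite_description _ (proj2_sig K)).

Definition PPb_map {M N : Type} (f : M -> N) (K : PPb M) : PPb N :=
  cls (cmap f (rep K)).

(* A pullback of the mono g1 is a mono, so piB is injective; moreover b lies
   in the image of piB exactly when f1 b lies in the image of g1.  Given X and Y
   with PP_b(f1) X = PP_b(g1) Y, every atom b of X therefore satisfies
   f1 b = g1 c for some c and has a unique preimage under piB; replacing atoms
   by these preimages yields Z with PP_b(piB) Z = X.  Then
   PP_b(g1) (PP_b(piC) Z) = PP_b(f1) X = PP_b(g1) Y, and PP_b(g1) is injective
   because PP_b preserves monos, so PP_b(piC) Z = Y.  Uniqueness of Z is the
   injectivity of PP_b(piB). *)
From Stdlib Require Import FunctionalExtensionality PropExtensionality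
  ProofIrrelevance ClassicalEpsilon FinFun.

Lemma eqc_refl M n (x : Lvl M n) : eqc M n x n x.
Proof.
  induction n as [|k IH]; simpl.
  - firstorder.
  - destruct x as [P|X]; simpl; [firstorder|].
    split; intros u Hu; exists u; auto.
Qed.

Lemma eqc_sym M n (x : Lvl M n) m (y : Lvl M m) :
  eqc M n x m y -> eqc M m y n x.
Proof.
  revert x m y; induction n as [|k IH]; intros x m y.
  - destruct m as [|m]; simpl; [firstorder|]. destruct y; simpl; firstorder.
  - destruct x as [P|X]; destruct m as [|m]; simpl; try destruct y; simpl;
      firstorder.
Qed.

Lemma eqc_trans M n (x : Lvl M n) m (y : Lvl M m) p (z : Lvl M p) :
  eqc M n x m y -> eqc M m y p z -> eqc M n x p z.
Proof.
  revert x m y p z; induction n as [|k IH]; intros x m y p z.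
  - destruct m, p; simpl; try destruct y; try destruct z; simpl; firstorder.
  - destruct x as [P|X].
    + destruct m, p; simpl; try destruct y; try destruct z; simpl; firstorder.
    + destruct m as [|m]; [destruct p; try destruct z; simpl; firstorder|].
      destruct y as [P'|Y]; [destruct p; try destruct z; simpl; firstorder|].
      destruct p as [|p]; [simpl; firstorder|].
      destruct z as [P''|Z]; simpl; [firstorder|].
      intros [XY YX] [YZ ZY]; split.
      * intros u Hu. destruct (XY u Hu) as (v & Hv & Euv).
        destruct (YZ v Hv) as (w & Hw & Evw). eauto.
      * intros w Hw. destruct (ZY w Hw) as (v & Hv & Evw).
        destruct (YX v Hv) as (u & Hu & Euv). eauto.
Qed.

Lemma lmap_comp M N O (f : M -> N) (g : N -> O) n (x : Lvl M n) :
  lmap M O (fun a => g (f a)) n x = lmap N O g n (lmap M N f n x).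
Proof.
  induction n as [|k IH]; simpl.
  - apply functional_extensionality; intro c;
      apply propositional_extensionality; firstorder; subst; eauto.
  - destruct x as [P|X]; f_equal; apply functional_extensionality; intro c;
      apply propositional_extensionality; [firstorder; subst; eauto|].
    split.
    + intros (u & Hu & ->). exists (lmap M N f k u). split; eauto.
    + intros (w & (u & Hu & ->) & ->). eauto.
Qed.

Lemma lmap_eqc M N (f : M -> N) n (x : Lvl M n) m (y : Lvl M m) :
  eqc M n x m y -> eqc N n (lmap M N f n x) m (lmap M N f m y).
Proof.
  revert x m y; induction n as [|k IH]; intros x m y.
  - destruct m as [|m]; simpl; [firstorder|]. destruct y; simpl; firstorder.
  - destruct x as [P|X]; [destruct m; simpl; try destruct y; simpl; firstorder|].
    destruct m as [|m]; simpl; [firstorder|].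
    destruct y as [P'|Y]; simpl; [firstorder|].
    intros [XY YX]; split.
    + intros w (u & Hu & ->). destruct (XY u Hu) as (v & Hv & E).
      exists (lmap M N f m v); split; eauto.
    + intros w (v & Hv & ->). destruct (YX v Hv) as (u & Hu & E).
      exists (lmap M N f k u); split; eauto.
Qed.

Lemma image_inj_iff M N (f : M -> N) (P P' : M -> Prop) : Injective f ->
  (forall b, (exists a, P a /\ f a = b) <-> (exists a, P' a /\ f a = b)) ->
  forall a, P a <-> P' a.
Proof.
  intros Hf H a; split; intro Ha.
  - destruct (proj1 (H (f a)) (ex_intro _ a (conj Ha eq_refl))) as (a' & Ha' & E).
    now rewrite (Hf _ _ E) in Ha'.
  - destruct (proj2 (H (f a)) (ex_intro _ a (conj Ha eq_refl))) as (a' & Ha' & E).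
    now rewrite (Hf _ _ E) in Ha'.
Qed.

Lemma eq_atoms_lmap_inj M N (f : M -> N) (P : M -> Prop) m (y : Lvl M m) :
  Injective f ->
  eq_atoms N (fun b => exists a, P a /\ f a = b) m (lmap M N f m y) ->
  eq_atoms M P m y.
Proof.
  intro Hf; destruct m as [|m]; simpl; [now apply image_inj_iff|].
  destruct y as [P'|Y]; simpl; [now apply image_inj_iff|].
  intros [HP HY]; split.
  - intros a Ha; apply (HP (f a)); eauto.
  - intros v Hv; apply (HY _ (ex_intro _ v (conj Hv eq_refl))).
Qed.

Lemma lmap_eqc_inj M N (f : M -> N) n (x : Lvl M n) m (y : Lvl M m) :
  Injective f -> eqc N n (lmap M N f n x) m (lmap M N f m y) -> eqc M n x m y.
Proof.
  intro Hf; revert x m y; induction n as [|k IH]; intros x m y.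
  - now apply eq_atoms_lmap_inj.
  - destruct x as [P|X]; [now apply eq_atoms_lmap_inj|].
    assert (Hempty : forall P' : M -> Prop,
              (forall w, ~ (exists u, X u /\ w = lmap M N f k u)) /\
              (forall b, ~ (exists a, P' a /\ f a = b)) ->
              (forall u, ~ X u) /\ (forall a, ~ P' a)).
    { intros P' [HX HP]; split.
      - intros u Hu. exact (HX _ (ex_intro _ u (conj Hu eq_refl))).
      - intros a Ha. exact (HP _ (ex_intro _ a (conj Ha eq_refl))). }
    destruct m as [|m]; [exact (Hempty y)|].
    destruct y as [P'|Y]; [exact (Hempty P')|]; simpl.
    intros [XY YX]; split.
    + intros u Hu.
      destruct (XY _ (ex_intro _ u (conj Hu eq_refl))) as (w & (v & Hv & ->) & E).
      eauto.
    + intros v Hv.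
      destruct (YX _ (ex_intro _ v (conj Hv eq_refl))) as (w & (u & Hu & ->) & E).
      eauto.
Qed.

Fixpoint atoms_in (M : Type) (Q : M -> Prop) (n : nat) : Lvl M n -> Prop :=
  match n return Lvl M n -> Prop with
  | O => fun P => forall a, P a -> Q a
  | S k => fun x => match x with
                    | inl P => forall a, P a -> Q a
                    | inr X => forall u, X u -> atoms_in M Q k u
                    end
  end.

Lemma atoms_in_eqc M Q n (x : Lvl M n) m (y : Lvl M m) :
  eqc M n x m y -> atoms_in M Q m y -> atoms_in M Q n x.
Proof.
  revert x m y; induction n as [|k IH]; intros x m y.
  - destruct m as [|m]; simpl; [firstorder|]. destruct y; simpl; firstorder.
  - destruct x as [P|X]; [destruct m; simpl; try destruct y; simpl; firstorder|].
    destruct m as [|m]; simpl; [firstorder|].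
    destruct y as [P'|Y]; simpl; [firstorder|].
    intros [XY _] HY u Hu. destruct (XY u Hu) as (v & Hv & E). eauto.
Qed.

Lemma atoms_in_lmap M N (f : M -> N) R n (x : Lvl M n) :
  atoms_in N R n (lmap M N f n x) -> atoms_in M (fun a => R (f a)) n x.
Proof.
  induction n as [|k IH]; simpl; [firstorder|].
  destruct x as [P|X]; simpl; [firstorder|].
  intros H u Hu; apply IH, H; eauto.
Qed.

Lemma atoms_in_lmap_range M N (g : M -> N) n (x : Lvl M n) :
  atoms_in N (fun d => exists c, g c = d) n (lmap M N g n x).
Proof.
  induction n as [|k IH]; simpl; [firstorder|].
  destruct x as [P|X]; simpl; [firstorder|].
  intros v (u & Hu & ->); auto.
Qed.

Lemma lmap_lift M N (p : M -> N) (Q : N -> Prop) n (y : Lvl N n) :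
  (forall b, Q b -> exists a, p a = b) ->
  atoms_in N Q n y -> exists x, lmap M N p n x = y.
Proof.
  intro HQ.
  assert (Hatoms : forall P : N -> Prop, (forall b, P b -> Q b) ->
            (fun b => exists a, P (p a) /\ p a = b) = P).
  { intros P HP. apply functional_extensionality; intro b;
      apply propositional_extensionality; split.
    - now intros (a & Ha & <-).
    - intro Hb. destruct (HQ b (HP b Hb)) as (a & <-). eauto. }
  induction n as [|k IH]; simpl.
  - intro H. exists (fun a => y (p a)). now apply Hatoms.
  - destruct y as [P|Y]; simpl; intro H.
    + exists (inl (fun a => P (p a))). simpl. now rewrite Hatoms.
    + exists (inr (fun u => Y (lmap M N p k u))). simpl. f_equal.
      apply functional_extensionality; intro v;
        apply propositional_extensionality; split.
      * now intros (u & Hu & ->).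
      * intro Hv. destruct (IH v (H v Hv)) as (u & <-). eauto.
Qed.

Lemma cls_eqP {M} (x y : Code M) : cls x = cls y <-> ceq x y.
Proof.
  split; intro H.
  - apply (f_equal (@proj1_sig _ _)) in H; simpl in H.
    rewrite H. apply eqc_refl.
  - assert (E : ceq x = ceq y).
    { apply functional_extensionality; intro z;
        apply propositional_extensionality; split; intro Hz.
      - eapply eqc_trans; [apply eqc_sym; exact H | exact Hz].
      - eapply eqc_trans; [exact H | exact Hz]. }
    unfold cls. revert E.
    generalize (ex_intro (fun x0 => ceq x = ceq x0) x eq_refl).
    generalize (ex_intro (fun x0 => ceq y = ceq x0) y eq_refl).
    intros ey ex E. revert ex. rewrite E. intro ex.
    f_equal. apply proof_irrelevance.
Qed.

Lemma cls_rep {M} (K : PPb M) : cls (rep K) = K.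
Proof.
  destruct K as [K HK]. unfold rep; simpl.
  destruct (constructive_indefinite_description _ HK) as [x ->]; simpl.
  unfold cls. f_equal. apply proof_irrelevance.
Qed.

Lemma cls_surj {M} (K : PPb M) : exists x, K = cls x.
Proof. exists (rep K). symmetry; apply cls_rep. Qed.

Lemma PPb_map_cls {M N} (f : M -> N) (x : Code M) :
  PPb_map f (cls x) = cls (cmap f x).
Proof.
  unfold PPb_map. apply cls_eqP, lmap_eqc, cls_eqP, cls_rep.
Qed.

Lemma PPb_map_comp {M N O} (f : M -> N) (g : N -> O) (K : PPb M) :
  PPb_map g (PPb_map f K) = PPb_map (fun a => g (f a)) K.
Proof.
  destruct (cls_surj K) as [x ->]. rewrite !PPb_map_cls.
  unfold cmap; simpl. now rewrite (lmap_comp M N O f g).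
Qed.

Lemma PPb_map_inj {M N} (f : M -> N) : Injective f -> Injective (PPb_map f).
Proof.
  intros Hf K K'.
  destruct (cls_surj K) as [x ->], (cls_surj K') as [y ->].
  rewrite !PPb_map_cls, !cls_eqP. now apply lmap_eqc_inj.
Qed.

Lemma is_pullback_intro {A B C D : Type}
  (pB : A -> B) (pC : A -> C) (f : B -> D) (g : C -> D) :
  (forall a, f (pB a) = g (pC a)) ->
  (forall b c, f b = g c -> exists a, pB a = b /\ pC a = c) ->
  (forall a a', pB a = pB a' -> pC a = pC a' -> a = a') ->
  is_pullback pB pC f g.
Proof.
  intros Hcomm Hex Hinj; split; [exact Hcomm|].
  intros X h k Hhk.
  exists (fun x => proj1_sig
            (constructive_indefinite_description _ (Hex _ _ (Hhk x)))).
  split; [|split]; [intro x | intro x | intros u' Hu1 Hu2 x];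
    destruct (constructive_indefinite_description _ _) as [a [Ha1 Ha2]];
    simpl; auto.
  apply Hinj; congruence.
Qed.

Lemma pullback_exists {A B C D : Type}
  (pB : A -> B) (pC : A -> C) (f : B -> D) (g : C -> D) b c :
  is_pullback pB pC f g -> f b = g c -> exists a, pB a = b /\ pC a = c.
Proof.
  intros [_ Huniv] E.
  destruct (Huniv unit (fun _ => b) (fun _ => c) (fun _ => E)) as (u & HB & HC & _).
  exists (u tt); auto.
Qed.

Lemma pullback_inj_proj {A B C D : Type}
  (pB : A -> B) (pC : A -> C) (f : B -> D) (g : C -> D) :
  is_pullback pB pC f g -> Injective g -> Injective pB.
Proof.
  intros [Hcomm Huniv] Hg a a' E.
  assert (E' : pC a = pC a') by (apply Hg; rewrite <- !Hcomm, E; reflexivity).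
  destruct (Huniv unit (fun _ => pB a) (fun _ => pC a) (fun _ => Hcomm a))
    as (u & _ & _ & Hu).
  rewrite (Hu (fun _ => a) (fun _ => eq_refl) (fun _ => eq_refl) tt).
  now rewrite (Hu (fun _ => a') (fun _ => eq_sym E) (fun _ => eq_sym E') tt).
Qed.

Lemma PPb_map_commute {A B C D : Type}
  (pB : A -> B) (pC : A -> C) (f : B -> D) (g : C -> D) K :
  (forall a, f (pB a) = g (pC a)) ->
  PPb_map f (PPb_map pB K) = PPb_map g (PPb_map pC K).
Proof.
  intro Hcomm. rewrite !PPb_map_comp.
  now replace (fun a => f (pB a)) with (fun a => g (pC a))
    by (apply functional_extensionality; auto).
Qed.

Lemma PPb_pullback_exists {A B C D : Type}
  (pB : A -> B) (pC : A -> C) (f : B -> D) (g : C -> D) X Y :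
  is_pullback pB pC f g -> Injective g ->
  PPb_map f X = PPb_map g Y -> exists Z, PPb_map pB Z = X /\ PPb_map pC Z = Y.
Proof.
  intros Hpb Hg E.
  destruct (cls_surj X) as [[n x] ->], (cls_surj Y) as [[m y] ->].
  rewrite !PPb_map_cls, cls_eqP in E; unfold ceq, cmap in E; simpl in E.
  assert (Hx : atoms_in B (fun b => exists c, g c = f b) n x).
  { apply (atoms_in_lmap B D f (fun d => exists c, g c = d)).
    eapply atoms_in_eqc; [exact E | apply atoms_in_lmap_range]. }
  assert (Hrange : forall b, (exists c, g c = f b) -> exists a, pB a = b).
  { intros b (c & Ec).
    destruct (pullback_exists pB pC f g b c Hpb (eq_sym Ec)) as (a & Ha & _).
    eauto. }
  destruct (lmap_lift A B pB _ n x Hrange Hx) as [z Hz].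
  assert (HZ : PPb_map pB (cls (existT _ n z)) = cls (existT _ n x)).
  { rewrite PPb_map_cls. unfold cmap; simpl. now rewrite Hz. }
  exists (cls (existT _ n z)); split; [exact HZ|].
  apply (PPb_map_inj g Hg).
  rewrite <- (PPb_map_commute pB pC f g) by apply Hpb.
  rewrite HZ, !PPb_map_cls. now apply cls_eqP.
Qed.

Theorem mainTheorem6 (A B C D : Type)
  (piB : A -> B) (piC : A -> C) (f1 : B -> D) (g1 : C -> D) :
  is_pullback piB piC f1 g1 ->
  (forall c c' : C, g1 c = g1 c' -> c = c') ->
  is_pullback (PPb_map piB) (PPb_map piC) (PPb_map f1) (PPb_map g1).
Proof.
  intros Hpb Hg.
  apply is_pullback_intro.
  - intro K. apply PPb_map_commute, Hpb.
  - intros X Y E. now apply PPb_pullback_exists with f1 g1.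
  - intros K K' E _.
    exact (PPb_map_inj piB (pullback_inj_proj _ _ _ _ Hpb Hg) _ _ E).
Qed.
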